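(* Suppose $(T_i,U_i)$, $i=1,\dots,n$, are generated independently from the first level of the model with fixed primary parameters $\theta^\star=(\theta_1^\star,\dots,\theta_n^\star)$ and fixed nuisance parameters $\nu^\star=(\nu_1^\star,\dots,\nu_n^\star)$, and that Assumption 1 holds. Let $G(\nu^\star):=\frac1n\sum_{i=1}^n\delta_{\nu_i^\star}$. Then $P^{\mathrm{or}}(T_i,U_i,G(\nu^\star))$, $i=1,\dots,n$, are compound p-values, i.e. $$\sup_{\alpha\in[0,1]}\Big(\frac1n\sum_{i\in\mathcal H_0}\mathbb P_{\nu^\star,\theta^\star}\big(P^{\mathrm{or}}(T_i,U_i,G(\nu^\star))\le\alpha\big)-\alpha\Big)_+\le0,$$ where $(x)_+=\max(x,0)$.
   Context: Setup: unit $i$'s data are summarized by $T_i\in\mathbb R$ and $U_i\in\mathcal U$; conditionally on parameters the pairs are independent, the law of $(T_i,U_i)$ depends only on $(\theta_i,\nu_i)$ through a common kernel, and the law of $U_i$ depends only on $\nu_i\in\mathcal V$. A null value $\theta_0$ is fixed, $\mathcal H_0=\{i:\theta_i^\star=\theta_0\}$. For a probability measure $G$ on $\mathcal V$, $P^{\mathrm{or}}(t,u,G):=\mathbb P(|T|\ge|t|\mid U=u)$ where $(T,U)$ is drawn with $\theta=\theta_0$ and $\nu\sim G$. $\mathbb P_{\nu^\star,\theta^\star}$ denotes probability with all parameters fixed. Assumption 1: for all $\nu,u$, the conditional law of $T_i$ given $\nu_i=\nu,U_i=u$ (under $\theta_i=\theta_0$) is absolutely continuous w.r.t. Lebesgue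 measure. *)

From HB Require Import structures.
From mathcomp Require Import all_boot all_order all_algebra.
From mathcomp Require Import all_classical all_reals all_analysis measurable_realfun.
Set Implicit Arguments. Unset Strict Implicit. Unset Printing Implicit Defensive.
Import Order.TTheory GRing.Theory Num.Theory.
Import numFieldNormedType.Exports.
Local Open Scope classical_set_scope.
Local Open Scope ring_scope.

(* [q] is a version of the regular conditional law of T given U, where
   (T,U) has joint law [mu] on R * U: q is a probability kernel U -> R and
   mu(A x B) = \int_{U in B} q(U)(A) dmu. *)
Definition is_cond_law (R : realType) (dU : measure_display) (U : measurableType dU)
  (mu : {measure set (R * U)%type -> \bar R}) (q : U -> probability R R) : Prop :=
  (forall A : set R, measurable A -> measurable_fun [set: U] (fun u : U => (q u A : \bar R))) /\
  (forall (A : set R) (B : set U), measurable A -> measurable B ->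
     mu (A `*` B) = (\int[mu]_(x in [set: R] `*` B) q x.2 A)%E).

(* the n-point mixture under the null: (T,U) drawn with theta = theta0 and
   nu ~ G(nu) = (1/n) sum_{k<n} delta_{nu k} *)
Definition null_mixture (R : realType) (dU : measure_display) (U : measurableType dU)
  (Th V : Type) (K : Th -> V -> probability (R * U)%type R) (th0 : Th)
  (n : nat) (nu : nat -> V) : {measure set (R * U)%type -> \bar R} :=
  mscale (n%:R^-1)%:nng
    (msum (fun k => (K th0 (nu k) : {measure set (R * U)%type -> \bar R})) n).

(* oracle p-value P^or(t,u,G) = P(|T| >= |t| | U = u), computed from a
   version q of the conditional law of T given U under the mixture *)
Definition Por (R : realType) (dU : measure_display) (U : measurableType dU)
  (q : U -> probability R R) (t : R) (u : U) : R :=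
  fine (q u [set s : R | `|t| <= `|s|]).

Definition mutually_independent (R : realType) (dO : measure_display)
  (Om : measurableType dO) (P : probability Om R) (dU : measure_display)
  (U : measurableType dU) (n : nat) (X : nat -> Om -> (R * U)%type) : Prop :=
  forall A : nat -> set (R * U)%type, (forall i, (i < n)%N -> measurable (A i)) ->
    P (\bigcap_(i in `I_n) (X i @^-1` A i)) = (\prod_(i < n) P (X i @^-1` A i))%E.

From HB Require Import structures.
From mathcomp Require Import all_boot all_order all_algebra.
From mathcomp Require Import all_classical all_reals all_analysis measurable_realfun.
Set Implicit Arguments. Unset Strict Implicit. Unset Printing Implicit Defensive.
Import Order.TTheory GRing.Theory Num.Theory.
Import numFieldNormedType.Exports.
Local Open Scope classical_set_scope.
Local Open Scope ring_scope.

(* Let M be the null mixture and C = {P^or <= a}.  Disintegrating M along U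
   gives M(C) = E[q_U(C_U)], and for every fixed law mu on R the set
   {t | mu(|T| >= |t|) <= a} has mu-measure at most a (a survival-function
   p-value is super-uniform, with no continuity assumption).  Hence M(C) <= a,
   and since M puts weight 1/n on each null component, the average null
   rejection probability is at most a. *)

Lemma le_forall_addinv (R : realType) (x a : R) :
  (forall m : nat, x <= a + m.+1%:R^-1) -> x <= a.
Proof.
move=> le_xa; rewrite leNgt; apply/negP => ax.
have [k hk] := ltr_add_invr ax.
by move: (le_xa k); rewrite leNgt hk.
Qed.

Section abs_tail.
Context (R : realType).

Definition abs_tail (x : R) : set R := [set s | x <= `|s|].

Lemma measurable_abs_tail (x : R) : measurable (abs_tail x).
Proof.
rewrite (_ : abs_tail x = setT `&` (@Num.norm _ R) @^-1` `[x, +oo[).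
  exact: normr_measurable (measurable_itv _).
by rewrite setTI; apply/funext => s /=; rewrite in_itv /= andbT.
Qed.

Lemma measurable_abs_gt (x : R) : measurable [set s : R | x < `|s|].
Proof.
rewrite (_ : [set s | _] = setT `&` (@Num.norm _ R) @^-1` `]x, +oo[).
  exact: normr_measurable (measurable_itv _).
by rewrite setTI; apply/funext => s /=; rewrite in_itv /= andbT.
Qed.

Lemma subset_abs_tail (x y : R) : x <= y -> abs_tail y `<=` abs_tail x.
Proof. by move=> xy s /=; exact: le_trans. Qed.

Variable mu : probability R R.

Definition abs_survival (x : R) : R := fine (mu (abs_tail x)).

Lemma abs_survivalE (x : R) : mu (abs_tail x) = (abs_survival x)%:E.
Proof.
rewrite fineK// ge0_fin_numE//.
exact: le_lt_trans (probability_le1 _ (measurable_abs_tail x)) (ltry 1).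
Qed.

Lemma abs_survival_nonincr : {homo abs_survival : x y /~ y <= x}.
Proof.
move=> x y xy; rewrite -lee_fin -!abs_survivalE.
by apply: le_measure; rewrite ?inE; [exact: measurable_abs_tail..|exact: subset_abs_tail].
Qed.

(* [x |-> mu (abs_tail x)] is left-continuous, abs_tail x being the decreasing
   intersection of the abs_tail (x - 1/(k+1)). *)
Lemma abs_tail_lt_left (x : R) (b : \bar R) : (mu (abs_tail x) < b)%E ->
  exists k : nat, (mu (abs_tail (x - k.+1%:R^-1)) < b)%E.
Proof.
pose F k := abs_tail (x - k.+1%:R^-1).
have mF k : measurable (F k) by exact: measurable_abs_tail.
have FE : \bigcap_k F k = abs_tail x.
  apply/seteqP; split => s /=.
    by move=> Fs; apply: le_forall_addinv => k; rewrite -lerBlDr; exact: Fs.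
  move=> xs k _; apply: le_trans xs.
  by rewrite lerBlDr lerDl invr_ge0 ler0n.
have Fdecr : nonincreasing_seq F.
  move=> k l kl; apply/subsetPset/subset_abs_tail.
  by rewrite lerD2l lerN2 lef_pV2 ?posrE ?ler_nat.
have F0fin : (mu (F 0%N) < +oo)%E by rewrite abs_survivalE ltry.
have := nonincreasing_cvg_mu F0fin mF (bigcapT_measurable mF) Fdecr.
rewrite FE => cvgF xb; have [N _ HN] := cvgF _ (open_ereal_lt' xb).
by exists N; exact: (HN N (leqnn N)).
Qed.

Lemma measurable_abs_survival_le (a : R) :
  measurable [set t : R | abs_survival `|t| <= a].
Proof.
rewrite (_ : [set t | _] = setT `&` (abs_survival \o (@Num.norm _ R)) @^-1` `]-oo, a]).
  have mS : measurable_fun setT abs_survival.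
    exact: nonincreasing_measurable abs_survival_nonincr.
  exact: (measurableT_comp mS (@normr_measurable R setT)) (measurable_itv _).
by rewrite setTI; apply/funext => t /=; rewrite in_itv.
Qed.

Lemma abs_gt_le_of_tail (r a : R) :
  (forall x, r < x -> (mu (abs_tail x) <= a%:E)%E) ->
  (mu [set s : R | (r < `|s|)%R] <= a%:E)%E.
Proof.
move=> tail_le; pose A k := abs_tail (r + k.+1%:R^-1).
have mA k : measurable (A k) by exact: measurable_abs_tail.
have AE : [set s : R | r < `|s|] = \bigcup_k A k.
  apply/seteqP; split => s /=.
    by move=> /ltr_add_invr[k hk]; exists k => //; exact: ltW.
  by move=> [k _]; apply: lt_le_trans; rewrite ltrDl invr_gt0 ltr0n.
have Aincr : nondecreasing_seq A.
  move=> k l kl; apply/subsetPset/subset_abs_tail.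
  by rewrite lerD2l lef_pV2 ?posrE ?ler_nat.
have mUA : measurable (\bigcup_k A k) by exact: bigcup_measurable.
have cvgA := nondecreasing_cvg_mu (mu := mu) mA mUA Aincr.
rewrite AE -(cvg_lim _ cvgA)//; apply: lime_le; first exact: cvgP cvgA.
by apply: nearW => k; apply: tail_le; rewrite ltrDl invr_gt0 ltr0n.
Qed.

(* The oracle p-value is valid without any continuity: with r the infimum of
   |t| over the rejection region D, D lies either in abs_tail |t0| for some t0
   in D, or in [set s | r < |s|]. *)
Lemma abs_survival_superuniform (a : R) : 0 <= a ->
  (mu [set t : R | (abs_survival `|t| <= a)%R] <= a%:E)%E.
Proof.
set D := [set t | _] => a0.
have [->|/set0P[t1 Dt1]] := eqVneq D set0; first by rewrite measure0 lee_fin.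
pose E := [set `|t| | t in D].
have lbE : has_lbound E by exists 0 => _ [t _ <-]; exact: normr_ge0.
have nE : E !=set0 by exists `|t1|, t1.
have [[t0 Dt0 t0E]|nEinf] := pselect (E (inf E)).
  apply: le_trans (_ : mu (abs_tail `|t0|) <= _)%E; last by rewrite abs_survivalE lee_fin.
  apply: le_measure; rewrite ?inE; [exact: measurable_abs_survival_le|exact: measurable_abs_tail|].
  by move=> s Ds /=; rewrite t0E; apply: ge_inf => //; exists s.
apply: le_trans (@abs_gt_le_of_tail (inf E) _ _).
  apply: le_measure; rewrite ?inE; [exact: measurable_abs_survival_le|exact: measurable_abs_gt|].
  by move=> s Ds; apply: inf_lb_strict => //; exists s.
move=> x /(inf_lt nE)[_ [t Dt <-] tx].
by rewrite abs_survivalE lee_fin; apply: le_trans Dt; apply/abs_survival_nonincr/ltW.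
Qed.

End abs_tail.

Section kernel_pvalue.
Context (R : realType) (dU : measure_display) (U : measurableType dU).
Variable q : U -> probability R R.
Hypothesis q_meas : forall A : set R, measurable A ->
  measurable_fun [set: U] (fun u => q u A).

Lemma Por_abs_survival (t : R) (u : U) : Por q t u = abs_survival (q u) `|t|.
Proof. by []. Qed.

(* Left continuity in the threshold lets the threshold range over the rationals. *)
Lemma measurable_Por_le (a : R) : measurable [set x : R * U | Por q x.1 x.2 <= a].
Proof.
pose B (m : nat) (p : rat) := [set t : R | ratr p < `|t|] `*`
  [set u | (q u (abs_tail (ratr p)) < (a + m.+1%:R^-1)%:E)%E].
have mB m p : measurable (B m p).
  apply: measurableX; first exact: measurable_abs_gt.
  rewrite -[X in measurable X]setTI.
  apply: (measurable_lte _ _ (measurable_cst (a + m.+1%:R^-1)%:E)) => //.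
  exact: q_meas (measurable_abs_tail _).
rewrite (_ : [set x | _] = \bigcap_m \bigcup_p B m p).
  by apply: bigcapT_measurable => m; exact: bigcupT_measurable_rat.
apply/seteqP; split => -[t u] /=.
- rewrite Por_abs_survival => Pa m _.
  have : (q u (abs_tail `|t|) < (a + m.+1%:R^-1)%:E)%E.
    by rewrite abs_survivalE lte_fin (le_lt_trans Pa)// ltrDl invr_gt0 ltr0n.
  move=> /abs_tail_lt_left[N qN].
  have : `|t| - N.+1%:R^-1 < `|t| by rewrite ltrBlDr ltrDl invr_gt0 ltr0n.
  move=> /rat_in_itvoo[p]; rewrite in_itv /= => /andP[Np pt].
  exists p => //; split => //=; apply: le_lt_trans qN.
  by apply: le_measure; rewrite ?inE; [exact: measurable_abs_tail..|exact/subset_abs_tail/ltW].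
- move=> Bt; apply: le_forall_addinv => m.
  have [p _ [/= pt qp]] := Bt m I.
  rewrite -lee_fin -abs_survivalE; apply/ltW/(le_lt_trans _ qp).
  by apply: le_measure; rewrite ?inE; [exact: measurable_abs_tail..|exact/subset_abs_tail/ltW].
Qed.

End kernel_pvalue.

Section disintegration.
Local Open Scope ereal_scope.
Context (R : realType) (dU : measure_display) (U : measurableType dU).
Variables (M : {measure set (R * U)%type -> \bar R}) (q : U -> probability R R).
Hypotheses (hq : is_cond_law M q) (M_fin : M setT \is a fin_num).

Definition section_prob (C : set (R * U)) (u : U) : \bar R := q u (ysection C u).

Let disintegrable (C : set (R * U)) : Prop :=
  measurable_fun [set: U] (section_prob C) /\ M C = \int[M]_x section_prob C x.2.

Let disintegrable_setT : disintegrable setT.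
Proof.
rewrite /disintegrable.
have -> : section_prob setT = cst 1.
  apply/funext => u; rewrite /section_prob.
  have -> : ysection [set: R * U] u = [set: R].
    by apply/seteqP; split => // x _; rewrite /ysection /= inE.
  exact: probability_setT.
by split; [exact: measurable_cst|rewrite integral_cst// mul1e].
Qed.

Let disintegrable_rectangle (A : set R) (B : set U) :
  measurable A -> measurable B -> disintegrable (A `*` B).
Proof.
move=> mA mB.
have phiAB : section_prob (A `*` B) = fun u => q u A * (\1_B u)%:E.
  apply/funext => u; rewrite /section_prob indicE.
  have [uB|uB] := boolP (u \in B); first by rewrite mule1 in_ysectionX.
  by rewrite mule0 notin_ysectionX.
split.
  rewrite phiAB; apply: emeasurable_funM; first exact: hq.1.
  by apply/measurable_EFinP; rewrite (_ : \1_ _ = mindic R mB).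
rewrite hq.2// integral_mkcond; apply: eq_integral => -[t u] _.
rewrite /patch phiAB /= indicE.
have [uB|uB] := boolP (u \in B).
  by rewrite mem_set ?mule1//; split=> //; rewrite -inE.
by rewrite memNset ?mule0// => -[_ /mem_set]; apply/negP.
Qed.

Let disintegrable_setC (S : set (R * U)) :
  measurable S -> disintegrable S -> disintegrable (~` S).
Proof.
move=> mS [mphiS MS].
have phiC : section_prob (~` S) = fun u => 1 - section_prob S u.
  apply/funext => u; rewrite /section_prob.
  have -> : ysection (~` S) u = ~` ysection S u.
    by apply/seteqP; split => x; rewrite /ysection /= !inE.
  by rewrite probability_setC//; exact: measurable_ysection.
have phiS_fin u : section_prob S u \is a fin_num.
  rewrite ge0_fin_numE// (le_lt_trans _ (ltry 1))//.
  by apply: probability_le1; exact: measurable_ysection.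
have MS_fin : M S \is a fin_num.
  have MST : M S <= M setT by apply: le_measure; rewrite ?inE.
  by rewrite ge0_fin_numE// (le_lt_trans MST)// -ge0_fin_numE.
have mphiC : measurable_fun [set: U] (section_prob (~` S)).
  by rewrite phiC; apply: emeasurable_funB => //; exact: measurable_cst.
split => //.
have sumT : \int[M]_x section_prob (~` S) x.2 + \int[M]_x section_prob S x.2 = M setT.
  rewrite -ge0_integralD//; first last.
  - exact: measurableT_comp mphiS measurable_snd.
  - exact: measurableT_comp mphiC measurable_snd.
  rewrite (_ : (fun x => _) = cst 1); first by rewrite integral_cst// mul1e.
  by apply/funext => x; rewrite phiC /= subeK.
have intS_fin : \int[M]_x section_prob S x.2 \is a fin_num by rewrite -MS.
rewrite -(addeK (\int[M]_x section_prob (~` S) x.2) intS_fin) sumT -MS.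
rewrite -(setvU S) measureU ?addeK//; [exact: measurableC|exact: setICl].
Qed.

Let disintegrable_bigcup (F : (set (R * U))^nat) :
  (forall k, measurable (F k)) -> trivIset setT F ->
  (forall k, disintegrable (F k)) -> disintegrable (\bigcup_k F k).
Proof.
move=> mF tF PF.
have phiU : section_prob (\bigcup_k F k) = fun u => \sum_(k <oo) section_prob (F k) u.
  apply/funext => u; rewrite /section_prob ysection_bigcup measure_semi_bigcup//.
  - by move=> k; exact: measurable_ysection.
  - exact: trivIset_ysection.
  - by rewrite -ysection_bigcup; apply/measurable_ysection/bigcup_measurable.
have mphiU : measurable_fun [set: U] (section_prob (\bigcup_k F k)).
  rewrite phiU; apply: (ge0_emeasurable_sum (P := xpredT)) => // k _.
  exact: (PF k).1.
split => //.
rewrite measure_semi_bigcup//; last exact: bigcup_measurable.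
rewrite phiU integral_nneseries//; first by apply: eq_eseriesr => k _; exact: (PF k).2.
by move=> k; exact: measurableT_comp (PF k).1 measurable_snd.
Qed.

Lemma cond_law_disintegration (C : set (R * U)) : measurable C ->
  measurable_fun [set: U] (section_prob C) /\ M C = \int[M]_x section_prob C x.2.
Proof.
move=> mC; pose G := [set A `*` B | A in @measurable _ R & B in @measurable _ U].
have GE : @measurable _ (R * U)%type = <<s G >> by exact: measurable_prod_measurableType.
rewrite GE in mC; apply: (dynkin_induction (P := disintegrable) GE) mC.
- move=> _ _ [X1 mX1 [X2 mX2 <-]] [Y1 mY1 [Y2 mY2 <-]].
  exists (X1 `&` Y1); first exact: measurableI.
  by exists (X2 `&` Y2); [exact: measurableI|rewrite setXI].
- exact: disintegrable_setT.
- by move=> _ [A mA [B mB <-]]; exact: disintegrable_rectangle.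
- exact: disintegrable_setC.
- exact: disintegrable_bigcup.
Qed.

End disintegration.

Lemma cond_law_Por_le (R : realType) (dU : measure_display) (U : measurableType dU)
    (M : {measure set (R * U)%type -> \bar R}) (q : U -> probability R R) (a : R) :
  is_cond_law M q -> M setT = 1%E -> 0 <= a ->
  (M [set x | (Por q x.1 x.2 <= a)%R] <= a%:E)%E.
Proof.
move=> hq M1 a0; set C := [set x | _].
have mC : measurable C by exact: measurable_Por_le hq.1 a.
have M_fin : M setT \is a fin_num by rewrite M1.
have [mphi ->] := cond_law_disintegration hq M_fin mC.
apply: (@le_trans _ _ (\int[M]_x (cst a%:E) x)%E); last by rewrite integral_cst// M1 mule1.
apply: ge0_le_integral => //; first exact: measurableT_comp mphi measurable_snd.
move=> [t u] _; rewrite /section_prob.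
have -> : ysection C u = [set s | abs_survival (q u) `|s| <= a].
  by apply/seteqP; split => s; rewrite /ysection /C /= inE.
exact: abs_survival_superuniform.
Qed.

Section null_mixture.
Context (R : realType) (dU : measure_display) (U : measurableType dU) (Th V : Type).
Variables (K : Th -> V -> probability (R * U)%type R) (th0 : Th) (n : nat) (nu : nat -> V).

Lemma null_mixture_setT : (0 < n)%N -> null_mixture K th0 n nu setT = 1%E.
Proof.
move=> n_gt0; rewrite /null_mixture /= /mscale /msum /=.
rewrite /msum (eq_bigr (fun=> 1%E)); last by move=> k _; exact: probability_setT.
by rewrite sumEFin sumr_const card_ord -EFinM mulVf// pnatr_eq0 -lt0n.
Qed.

Lemma null_sum_le_null_mixture (theta : nat -> Th) (C : set (R * U)) :
  ((n%:R^-1)%:E * \sum_(i < n | `[< theta i = th0 >]) K (theta i) (nu i) C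
     <= null_mixture K th0 n nu C)%E.
Proof.
apply: lee_wpmul2l; first by rewrite lee_fin invr_ge0.
rewrite [leRHS](bigID (fun i : 'I_n => `[< theta i = th0 >])) /=.
rewrite -[leLHS]adde0; apply: leeD; last by apply: sume_ge0 => i _.
by apply: lee_sum => i /asboolP ->.
Qed.

End null_mixture.

Theorem proposition5
  (R : realType) (dO : measure_display) (Om : measurableType dO) (P : probability Om R)
  (dU : measure_display) (U : measurableType dU) (Th V : Type)
  (K : Th -> V -> probability (R * U)%type R)
  (law_U_nu_only : forall (th th' : Th) (v : V) (B : set U), measurable B ->
     K th v ([set: R] `*` B) = K th' v ([set: R] `*` B))
  (th0 : Th) (n : nat) (n_gt0 : (0 < n)%N)
  (theta : nat -> Th) (nu : nat -> V) (X : nat -> Om -> (R * U)%type)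
  (X_meas : forall i, (i < n)%N -> measurable_fun [set: Om] (X i))
  (X_indep : mutually_independent P n X)
  (X_law : forall i, (i < n)%N -> forall A : set (R * U)%type, measurable A ->
     P (X i @^-1` A) = K (theta i) (nu i) A)
  (assumption1 : exists kappa : V -> U -> probability R R,
     forall v : V, is_cond_law (K th0 v : {measure set (R * U)%type -> \bar R}) (kappa v) /\
       forall u : U, kappa v u `<< (@lebesgue_measure R))
  (q : U -> probability R R)
  (hq : is_cond_law (null_mixture K th0 n nu) q) :
  (ereal_sup [set maxe ((n%:R^-1)%:E *
        (\sum_(i < n | `[< theta i = th0 >])
           P [set w | (Por q (X i w).1 (X i w).2 <= alpha)%R]) - alpha%:E) 0
     | alpha in `[0%R, 1%R]] <= 0)%E.
Proof.
apply: ge_ereal_sup => _ [a a01 <-].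
have a0 : 0 <= a by move: a01 => /= /[1!in_itv] /andP[].
rewrite ge_max lexx andbT sube_le0.
set C := [set x : R * U | Por q x.1 x.2 <= a].
have mC : measurable C by exact: measurable_Por_le hq.1 a.
have -> : \sum_(i < n | `[< theta i = th0 >]) P [set w | Por q (X i w).1 (X i w).2 <= a] =
    \sum_(i < n | `[< theta i = th0 >]) K (theta i) (nu i) C.
  by apply: eq_bigr => i _; exact: X_law.
apply: le_trans (null_sum_le_null_mixture K th0 n nu theta C) _.
exact: cond_law_Por_le hq (null_mixture_setT K th0 nu n_gt0) a0.
Qed.
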